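(* Let $n\geq 3$ be an integer and put $m=2^{n-1}$. Let $G_2(n)=\{0,1,\dots,2^n-1\}$ with the binary operation $\oplus$ and the map $A\colon G_2(n)\to G_2(n)$ defined in the context below. Then $A$ is an automorphism of the groupoid $(G_2(n),\oplus)$, i.e. $A$ is a bijection and $A(i\oplus j)=A(i)\oplus A(j)$ for all $i,j\in G_2(n)$.
   Context: Let $n\ge 3$, $m=2^{n-1}$, $G_2(n)=\{0,1,\dots,2^n-1\}$ (as a set of integers), $P(n)=\{0,1,\dots,m-1\}$ and $H(n)=\{m,m+1,\dots,2^n-1\}$. Let $O_P$, $E_P$ be the odd, resp. even, elements of $P(n)$, and $O_H$, $E_H$ the odd, resp. even, elements of $H(n)$. For $i,j\in G_2(n)$ let $t,s\in P(n)$ be the unique elements with $t\equiv i+j \pmod m$ and $s\equiv i+j+\frac{m}{2}\pmod m$, and define $i\oplus j=t$ if $(i,j)\in (P(n)\times P(n))\cup\big[(H(n)\times H(n))\setminus(E_H\times O_H)\big]$; $i\oplus j=t+m$ if $(i,j)\in (P(n)\times H(n))\cup\big[(H(n)\times P(n))\setminus(E_H\times O_P)\big]$; $i\oplus j=s$ if $(i,j)\in E_H\times O_H$; $i\oplus j=s+m$ if $(i,j)\in E_H\times O_P$. Define $A\colon G_2(n)\to G_2(n)$ by $A(i)=r$ if $i\in O_P$, $A(i)=r+m$ if $i\in O_H$, and $A(i)=i$ otherwise, where $r\in P(n)$ is the unique element with $r\equiv i+\frac{m}{2}\pmod m$. *)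

From mathcomp Require Import all_boot.
Set Implicit Arguments. Unset Strict Implicit. Unset Printing Implicit Defensive.

(* m = 2^(n-1); elements of G_2(n) are the nats < 2^n.
   P(n) = [0,m), H(n) = [m, 2^n). *)
Definition mG (n : nat) : nat := 2 ^ n.-1.

Definition inP (n i : nat) : bool := i < mG n.
Definition inH (n i : nat) : bool := ~~ inP n i.

Definition opG (n i j : nat) : nat :=
  let m := mG n in
  let t := (i + j) %% m in
  let s := (i + j + m %/ 2) %% m in
  if inP n i && inP n j then t
  else if inH n i && inH n j then
         (if ~~ odd i && odd j then s else t)
  else if inP n i && inH n j then t + m
  else (* i in H, j in P *)
         (if ~~ odd i && odd j then s + m else t + m).

Definition AG (n i : nat) : nat :=
  let m := mG n in
  let r := (i + m %/ 2) %% m in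
  if odd i then (if inP n i then r else r + m) else i.

From mathcomp Require Import all_boot.
From mathcomp Require Import zify.

Set Implicit Arguments.
Unset Strict Implicit.
Unset Printing Implicit Defensive.

(* Write i < 2m as the pair (inH i, i mod m) and put h = m/2, which is even
   since n >= 3. Then i (+) j has H-bit inH i (+) inH j and residue
   i + j + h*[i in E_H, j odd] (mod m), while A keeps the H-bit and adds h to
   the residue of odd elements. As h is even, A preserves parity and H-bits,
   so the correction term of (+) is unchanged; as 2h = m, adding h once per odd
   argument is the same as adding h once when the sum is odd. Finally A is an
   involution, hence a bijection. *)

Lemma muln_addb_mod (h : nat) (a b : bool) :
  h * a + h * b = h * (a (+) b) %[mod h * 2].
Proof.
by case: a; case: b; rewrite /= ?muln0 ?muln1 ?addn0 // addnn -muln2 modnn mod0n.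
Qed.

Lemma expn_mG n : 0 < n -> 2 ^ n = mG n * 2.
Proof. by case: n => // n _; rewrite /mG expnSr. Qed.

Lemma half_mGK n : 2 <= n -> mG n %/ 2 * 2 = mG n.
Proof. by case: n => [|[|n]] // _; rewrite /mG /= expnS mulKn // mulnC. Qed.

Lemma odd_half_mG n : 3 <= n -> odd (mG n %/ 2) = false.
Proof. by case: n => [|[|[|n]]] // _; rewrite /mG /= expnS mulKn // expnS oddM. Qed.

Section Automorphism.

Variable n : nat.
Hypothesis n_ge3 : 3 <= n.

Local Notation m := (mG n).
Local Notation h := (mG n %/ 2).

Let m_double : m = h * 2.
Proof. by rewrite half_mGK //; apply: ltnW. Qed.

Let odd_h : odd h = false.
Proof. exact: odd_half_mG. Qed.

Let odd_m : odd m = false.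
Proof. by rewrite m_double oddM andbF. Qed.

Let m_gt0 : 0 < m.
Proof. exact: expn_gt0. Qed.

Lemma inH_split i : i < m * 2 -> i = inH n i * m + i %% m.
Proof.
move=> lt_i2m; rewrite /inH /inP.
case: (ltnP i m) => [lt_im | le_mi] /=; first by rewrite modn_small.
by rewrite -{2}(subnK le_mi) modnDr modn_small; lia.
Qed.

Lemma addm_lt (b : bool) w : w < m -> b * m + w < m * 2.
Proof. by case: b => /=; lia. Qed.

Lemma inH_addm (b : bool) w : w < m -> inH n (b * m + w) = b.
Proof. by rewrite /inH /inP; case: b => /=; lia. Qed.

Lemma opG_split i j : opG n i j =
  (inH n i (+) inH n j) * m + (i + j + h * (inH n i && ~~ odd i && odd j)) %% m.
Proof.
rewrite /opG /inH; case: (inP n i); case: (inP n j); case: (~~ odd i && odd j);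
  by rewrite /= ?muln0 ?muln1 ?addn0 ?mul1n ?mul0n ?add0n // addnC.
Qed.

Lemma AG_split i : i < m * 2 -> AG n i = inH n i * m + (i + h * odd i) %% m.
Proof.
move=> lt_i2m; rewrite /AG /inH; case: (odd i) => /=.
  by case: (inP n i); rewrite /= muln1 ?mul1n // addnC.
by rewrite muln0 addn0 {1}(inH_split lt_i2m).
Qed.

Lemma AG_lt i : i < m * 2 -> AG n i < m * 2.
Proof. by move=> lt_i2m; rewrite AG_split // addm_lt // ltn_mod. Qed.

Lemma inH_AG i : i < m * 2 -> inH n (AG n i) = inH n i.
Proof. by move=> lt_i2m; rewrite AG_split // inH_addm // ltn_mod. Qed.

Lemma odd_AG i : odd (AG n i) = odd i.
Proof.
rewrite /AG; case odd_i: (odd i) => //.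
by case: (inP n i); rewrite ?oddD odd_mod // oddD odd_h ?odd_m odd_i.
Qed.

Lemma AG_mod i : AG n i = i + h * odd i %[mod m].
Proof.
rewrite /AG; case: (odd i); last by rewrite muln0 addn0.
by case: (inP n i); rewrite ?modnDr modn_mod muln1.
Qed.

Lemma AG_involutive i : i < m * 2 -> AG n (AG n i) = i.
Proof.
move=> lt_i2m; rewrite AG_split ?AG_lt // inH_AG // odd_AG -modnDml AG_mod modnDml.
rewrite -addnA -mulnDr addnn [RHS](inH_split lt_i2m); congr (_ + _).
by case: (odd i); rewrite /= ?muln0 ?addn0 // -m_double modnDr.
Qed.

Lemma AG_opG i j : i < m * 2 -> j < m * 2 ->
  AG n (opG n i j) = opG n (AG n i) (AG n j).
Proof.
move=> lt_i2m lt_j2m.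
rewrite [in RHS]opG_split inH_AG // inH_AG // !odd_AG opG_split.
set c := inH n i && ~~ odd i && odd j.
set w := (i + j + h * c) %% m.
have lt_wm : w < m by rewrite ltn_mod.
have odd_w : odd w = odd i (+) odd j by rewrite odd_mod // !oddD oddM odd_h addbF.
have AG_add : AG n i + AG n j = i + j + h * (odd i (+) odd j) %[mod m].
  have := muln_addb_mod h (odd i) (odd j); rewrite -m_double => half_sum.
  by rewrite -modnDm !AG_mod modnDm addnACA -modnDmr half_sum modnDmr.
rewrite AG_split ?addm_lt // inH_addm //; congr (_ + _).
rewrite oddD oddM odd_m andbF odd_w -addnA modnMDl /w modnDml.
by rewrite -[RHS]modnDml AG_add modnDml addnAC.
Qed.

End Automorphism.

Theorem mainTheorem1 (n : nat) (hn : 3 <= n) :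
  (* A maps G_2(n) = {0,...,2^n-1} into itself *)
  (forall i, i < 2 ^ n -> AG n i < 2 ^ n) /\
  (* A is injective on G_2(n) *)
  (forall i j, i < 2 ^ n -> j < 2 ^ n -> AG n i = AG n j -> i = j) /\
  (* A is surjective onto G_2(n) *)
  (forall j, j < 2 ^ n -> exists2 i, i < 2 ^ n & AG n i = j) /\
  (* A is a homomorphism of (G_2(n), ⊕) *)
  (forall i j, i < 2 ^ n -> j < 2 ^ n ->
     AG n (opG n i j) = opG n (AG n i) (AG n j)).
Proof.
rewrite expn_mG; last exact: leq_trans hn.
split; first exact: AG_lt.
split.
  by move=> i j lt_i lt_j AGij; rewrite -(AG_involutive hn lt_i) AGij AG_involutive.
split; last exact: AG_opG.
by move=> j lt_j; exists (AG n j); [apply: AG_lt | apply: AG_involutive].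
Qed.
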